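(* Let $r,m$ be positive integers, $n=2rm$, and let $f:\mathbb{F}_{2^n}\to\mathbb{F}_{2^n}$ be an almost-$(2^r+1)$-to-1 component-wise plateaued map with $f(0)=0$ such that $0$ is the unique element of $\mathrm{Im}(f)$ with exactly one preimage. Then $f$ has exactly $\frac{2^r}{2^r+1}(2^n-1)$ bent components and exactly $\frac{2^n-1}{2^r+1}$ plateaued components with amplitude $t=2r$. Moreover, for every $b\in\mathbb{F}_{2^n}^*$, \[W_f(b,0)\in\{(-1)^m2^{rm},\,(-1)^{m+1}2^{r(m+1)}\}.\]
   Context: $\mathrm{Tr}$ denotes the absolute trace $\mathbb{F}_{2^n}\to\mathbb{F}_2$. The Walsh transform is $W_f(b,a)=\sum_{x\in\mathbb{F}_{2^n}}(-1)^{\mathrm{Tr}(bf(x)+ax)}$. The component functions of $f$ are $x\mapsto\mathrm{Tr}(\lambda f(x))$, $\lambda\in\mathbb{F}_{2^n}^*$. The component for $\lambda$ is plateaued with amplitude $t\geq 0$ if $W_f(\lambda,a)\in\{0,\pm 2^{(n+t)/2}\}$ for all $a\in\mathbb{F}_{2^n}$; $f$ is component-wise plateaued if all its components are plateaued; for $n$ even a plateaued component with $t=0$ is called bent. $f$ is almost-$k$-to-1 if there is a unique element of $\mathrm{Im}(f)$ with exactly one preimage and every other element of $\mathrm{Im}(f)$ has exactly $k$ preimages. *)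

From mathcomp Require Import all_boot all_order all_algebra.
Set Implicit Arguments. Unset Strict Implicit. Unset Printing Implicit Defensive.
Import Order.TTheory GRing.Theory Num.Theory.
Local Open Scope ring_scope.

(* F plays the role of F_{2^n}; the statement assumes #|F| = 2^n. *)
Section Walsh.
Variables (F : finFieldType) (n : nat).

(* absolute trace F_{2^n} -> F_2 (value in the prime subfield {0,1} of F) *)
Definition trF (x : F) : F := \sum_(i < n) x ^+ (2 ^ i).

Definition chi (x : F) : int := if trF x == 0 then 1 else -1.

Definition walsh (f : F -> F) (b a : F) : int :=
  \sum_(x : F) chi (b * f x + a * x).

(* component lambda is plateaued with amplitude t:
   W_f(lambda,a) in {0, +-2^((n+t)/2)} for all a, written as W^2 in {0, 2^(n+t)} *)
Definition plateaued_comp (f : F -> F) (lam : F) (t : nat) : bool :=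
  [forall a : F, (walsh f lam a == 0) || ((walsh f lam a) ^+ 2 == (2 ^ (n + t))%:Z)].

Definition componentwise_plateaued (f : F -> F) : Prop :=
  forall lam : F, lam != 0 -> exists t : nat, plateaued_comp f lam t.

Definition bent_comp (f : F -> F) (lam : F) : bool := plateaued_comp f lam 0.

End Walsh.

Definition preim_card (F : finType) (G : eqType) (f : F -> G) (y : G) : nat :=
  #|[set x | f x == y]|.

Definition almost_k_to_1 (F : finType) (f : F -> F) (k : nat) : Prop :=
  exists y0, [/\ y0 \in codom f, preim_card f y0 = 1%N &
    forall y, y \in codom f -> y != y0 -> preim_card f y = k].

From mathcomp Require Import all_boot all_order all_algebra finfield.
From mathcomp Require Import zify ring.
Import GRing.Theory Num.Theory.
Set Implicit Arguments.
Unset Strict Implicit.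
Unset Printing Implicit Defensive.
Local Open Scope ring_scope.

(* Write W b = W_f(b,0) and x_q = (-1)^q 2^(rq).  The proof has three layers.
   1. Character sums over F = F_{2^n}: (-1)^Tr is an additive character and
      sum_b (-1)^Tr(by) = 2^n [y = 0].  For f with f 0 = 0, 0 the only preimage
      of 0 and k preimages for every other image point this gives
      W b = 1 (mod k),  sum_b W b = 2^n  and  sum_b W b^2 = 2^n (1 + (2^n-1) k).
   2. Elementary number theory: an integer W = 1 (mod 2^r+1) with |W| a power
      of two is some x_q, and x_q lies outside the open interval between x_m
      and x_(m+1) whenever q >= m.
   3. For b <> 0 the component is plateaued and W b <> 0, so W b^2 = 2^(n+t)
      and hence W b = x_q with q >= m.  Then (W b - x_m)(W b - x_(m+1)) >= 0,
      while the moments of layer 1 make the sum of these products over b <> 0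
      vanish; so W b is x_m (bent) or x_(m+1) (amplitude 2r).  The first
      two moments then count both kinds of components. *)

Definition sgpow (r q : nat) : int := (-1) ^+ q * (2 ^ (r * q))%:Z.

Lemma sign_cases (q : nat) : (-1) ^+ q = 1 :> int \/ (-1) ^+ q = -1 :> int.
Proof. by rewrite -signr_odd; case: (odd q); [right | left]. Qed.

Lemma Posz_expn (a k : nat) : (a ^ k)%:Z = a%:Z ^+ k.
Proof. by rewrite -!natz natrX. Qed.

Lemma sqrt_pow2 (a e : nat) :
  (a ^ 2 = 2 ^ e)%N -> exists k, a = (2 ^ k)%N /\ e = (2 * k)%N.
Proof.
move=> sq_a.
have : (a %| 2 ^ e)%N by rewrite -sq_a expnS expn1 dvdn_mulr.
case/(dvdn_pfactor _ _ (isT : prime 2)) => k _ a_eq.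
exists k; split => //.
by move: sq_a; rewrite a_eq -expnM mulnC => /expnI ->.
Qed.

Lemma sign_abs_decomp (W : int) : exists2 σ : int, σ = 1 \/ σ = -1 & W = σ * `|W|%:Z.
Proof.
case: (ltrgtP W 0) => [W_lt0|W_gt0|->].
- by exists (-1); [right | rewrite mulN1r ltz0_abs // opprK].
- by exists 1; [left | rewrite mul1r gtz0_abs].
- by exists 1; [left | rewrite mulr0].
Qed.

(* R = -1 (mod R + 1), hence R^q = (-1)^q (mod R + 1). *)
Lemma pow_sign_congr (R : int) (q : nat) : exists z, R ^+ q = (-1) ^+ q + (R + 1) * z.
Proof.
exists (\sum_(i < q) R ^+ (q.-1 - i) * (-1) ^+ i).
by rewrite -[X in R + X]opprK -subrXX addrC subrK.
Qed.

Lemma one_add_mul_neq0 (k K : int) : 1 < k -> 1 + k * K != 0.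
Proof.
move=> k_gt1; apply/eqP => eq0.
have [K0|[K_ge1|K_le1]] : K = 0 \/ 1 <= K \/ K <= -1 by lia.
- by move: eq0; rewrite K0 mulr0 addr0.
- have : k <= k * K by rewrite ler_peMr //; lia.
  lia.
- have : k <= k * - K by rewrite ler_peMr //; lia.
  by rewrite mulrN; lia.
Qed.

(* If 1 <= S <= R/2 and ±S = 1 (mod R + 1), then the sign is + and S = 1:
   the difference ±S - 1 is too small to be a nonzero multiple of R + 1. *)
Lemma unit_congr (e S R L : int) : e = 1 \/ e = -1 -> 1 <= S -> 2 * S <= R ->
  e * S - 1 = (R + 1) * L -> e = 1 /\ S = 1.
Proof.
move=> e_pm S_ge1 S_small eqL.
have [L0|[L_ge1|L_le1]] : L = 0 \/ 1 <= L \/ L <= -1 by lia.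
- by move: eqL; rewrite L0 mulr0; case: e_pm => ->; lia.
- have : R + 1 <= (R + 1) * L by rewrite ler_peMr //; lia.
  by case: e_pm eqL => ->; lia.
- have : R + 1 <= (R + 1) * - L by rewrite ler_peMr //; lia.
  by rewrite mulrN; case: e_pm eqL => ->; lia.
Qed.

(* An integer W = 1 (mod 2^r + 1) with |W| = 2^k is x_q for some q with
   k = rq: write k = qr + s with s < r, so that W = ±2^s (2^r)^q = ±(-1)^q 2^s
   (mod 2^r + 1), and apply unit_congr. *)
Lemma congr_one_pow2 (r k : nat) (W K : int) : (0 < r)%N ->
  W = 1 + ((2 ^ r).+1)%:Z * K -> `|W|%N = (2 ^ k)%N ->
  exists q, k = (r * q)%N /\ W = sgpow r q.
Proof.
move=> r_gt0 W_congr W_abs.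
have [σ σ_pm W_σ] := sign_abs_decomp W; rewrite W_abs in W_σ.
set q := (k %/ r)%N; set s := (k %% r)%N.
have k_eq : k = (q * r + s)%N := divn_eq k r.
have s_lt : (s < r)%N := ltn_pmod k r_gt0.
set S := (2 ^ s)%:Z; set R := (2 ^ r)%:Z.
have {}W_congr : W = 1 + (R + 1) * K by rewrite W_congr -addn1 PoszD.
have [z Rq] := pow_sign_congr R q.
set τ := (-1) ^+ q in Rq.
have pow_k : (2 ^ k)%:Z = S * R ^+ q.
  by rewrite k_eq addnC expnD PoszM [(q * r)%N]mulnC expnM (Posz_expn (2 ^ r)).
have W_expand : σ * (S * (τ + (R + 1) * z)) = 1 + (R + 1) * K.
  by rewrite -W_congr W_σ pow_k Rq.
have στ_congr : σ * τ * S - 1 = (R + 1) * (K - σ * S * z).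
  by rewrite mulrBr -(addKr 1 ((R + 1) * K)) -W_expand; ring.
have S_ge1 : 1 <= S by rewrite /S; have := expn_gt0 2 s; lia.
have S_small : 2 * S <= R.
  have : (2 * 2 ^ s <= 2 ^ r)%N by rewrite -expnS leq_exp2l.
  by rewrite /S /R; lia.
have στ_pm : σ * τ = 1 \/ σ * τ = -1.
  by rewrite /τ; case: σ_pm => ->; case: (sign_cases q) => ->;
    rewrite ?mul1r ?mulN1r ?opprK; auto.
have [στ1 S1] := unit_congr στ_pm S_ge1 S_small στ_congr.
have s0 : s = 0%N.
  by apply/eqP; rewrite -(eqn_exp2l _ 0 (isT : (1 < 2)%N)); move: S1; rewrite /S; lia.
exists q; split; first by rewrite k_eq s0 addn0 mulnC.
rewrite W_σ k_eq s0 addn0 mulnC /sgpow.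
by congr (_ * _); case: σ_pm στ1 => ->; rewrite /τ; case: (sign_cases q) => ->; lia.
Qed.

Lemma sgpow_sq (r q : nat) : sgpow r q ^+ 2 = (2 ^ (2 * (r * q)))%:Z.
Proof. by rewrite /sgpow exprMn sqrr_sign mul1r -Posz_expn -expnM mulnC. Qed.

Lemma sgpow_sq_eq (r q e : nat) :
  (sgpow r q ^+ 2 == (2 ^ e)%:Z) = (2 * (r * q) == e)%N.
Proof. by rewrite sgpow_sq eqz_nat eqn_exp2l. Qed.

Lemma sgpowS (r q : nat) : sgpow r q.+1 = - ((2 ^ r)%:Z * sgpow r q).
Proof. by rewrite /sgpow exprS mulnS expnD PoszM; ring. Qed.

(* Consecutive values are distinct (their squares differ). *)
Lemma sgpow_neqS (r q : nat) : (0 < r)%N -> sgpow r q != sgpow r q.+1.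
Proof.
move=> r_gt0; apply/eqP => eq_q_qS; move: (sgpow_sq r q).
by rewrite eq_q_qS sgpow_sq => /eqP; rewrite eqz_nat eqn_exp2l // => /eqP; nia.
Qed.

(* x_m and x_(m+1) have opposite signs and |x_m| < |x_(m+1)| <= |x_q| for
   q > m + 1, so no x_q with q >= m lies strictly between them. *)
Lemma sgpow_outside (r m q : nat) : (0 < r)%N -> (m <= q)%N ->
  0 <= (sgpow r q - sgpow r m) * (sgpow r q - sgpow r m.+1).
Proof.
move=> r_gt0 m_le_q.
have [->|q_neq_m] := eqVneq q m; first by rewrite subrr mul0r.
have [->|q_neq_m1] := eqVneq q m.+1; first by rewrite subrr mulr0.
rewrite sgpowS /sgpow.
set X := (2 ^ (r * q))%:Z; set A := (2 ^ (r * m))%:Z; set R := (2 ^ r)%:Z.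
have X_large : A * R <= X.
  by rewrite /A /R /X -PoszM -expnD lez_nat leq_exp2l //; nia.
have A_ge1 : 1 <= A by rewrite /A; have := expn_gt0 2 (r * m); lia.
have R_ge2 : 2 <= R.
  have : (2 ^ 1 <= 2 ^ r)%N by rewrite leq_exp2l.
  by rewrite /R expn1; lia.
have X_ge_A : A <= X by nia.
by case: (sign_cases q) => ->; case: (sign_cases m) => ->; nia.
Qed.

Lemma sum_two_valued (T : finType) (P : pred T) (w : T -> int) (a c : int)
    (G : int -> int) :
  a != c -> (forall i, P i -> w i = a \/ w i = c) ->
  \sum_(i | P i) G (w i) =
    G a * #|[set i | P i && (w i == a)]|%:Z + G c * #|[set i | P i && (w i == c)]|%:Z.
Proof.
move=> a_neq_c two_valued.
rewrite (bigID (fun i => w i == a)) /=.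
rewrite (eq_bigr (fun _ => G a)); last by move=> i /andP[_ /eqP ->].
rewrite [X in _ + X](eq_bigr (fun _ => G c)); last first.
  move=> i /andP[Pi wi_neq_a]; case: (two_valued i Pi) => wi; last by rewrite wi.
  by move: wi_neq_a; rewrite wi eqxx.
rewrite !sumr_const !pmulrn !mulrzz !cardsE; congr (_ + _ * _%:Z).
apply: eq_card => i; rewrite !unfold_in /=.
case: (boolP (P i)) => //= Pi.
by case: (two_valued i Pi) => ->; rewrite ?eqxx ?(negbTE a_neq_c) // eq_sym.
Qed.

(* In an almost-k-to-1 map (k <> 1) an image point with a single preimage is
   the distinguished one, so all other image points have k preimages. *)
Lemma almost_k_to_1_fibres (T : finType) (f : T -> T) (k : nat) (y0 : T) :
  k != 1%N -> almost_k_to_1 f k -> y0 \in codom f -> preim_card f y0 = 1%N ->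
  forall y, y \in codom f -> y != y0 -> preim_card f y = k.
Proof.
move=> k_neq1 [y1 [_ _ fibres]] y0_im preim_y0.
have -> : y0 = y1.
  apply/eqP; apply: contraTT k_neq1 => y0_neq_y1.
  by rewrite negbK -(fibres _ y0_im y0_neq_y1) preim_y0.
exact: fibres.
Qed.

Section AdditiveCharacter.
Variables (F : finFieldType) (n : nat).
Hypothesis F_card : #|F| = (2 ^ n)%N.
Local Notation tr := (@trF F n).
Local Notation chi := (@chi F n).

Lemma char2 : 2%N \in [pchar F].
Proof. exact: card_finPcharP F_card isT. Qed.

Lemma n_gt0 : (0 < n)%N.
Proof. by have := card_finNzRing_gt1 F; rewrite F_card; case: n. Qed.

Lemma frobenius_iterD (x y : F) (i : nat) :
  (x + y) ^+ (2 ^ i) = x ^+ (2 ^ i) + y ^+ (2 ^ i).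
Proof.
elim: i => [|i IH]; first by rewrite !expr1.
by rewrite expnSr !exprM IH -!(pFrobenius_autE char2) rmorphD.
Qed.

Lemma trD (x y : F) : tr (x + y) = tr x + tr y.
Proof. by rewrite /trF -big_split; apply: eq_bigr => i _; rewrite frobenius_iterD. Qed.

Lemma tr0 : tr 0 = 0.
Proof. by rewrite /trF big1 // => i _; rewrite expr0n expn_eq0. Qed.

(* Squaring permutes the summands x^(2^i) cyclically, since x^(2^n) = x. *)
Lemma tr_sq (x : F) : tr x ^+ 2 = tr x.
Proof.
rewrite -(pFrobenius_autE char2) /trF rmorph_sum /=.
case: n n_gt0 F_card => // n' _ card_n'.
rewrite big_ord_recr big_ord_recl /= expn0 expr1 addrC.
congr (_ + _); first by rewrite pFrobenius_autE -exprM -expnSr -card_n' expf_card.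
by apply: eq_bigr => i _; rewrite pFrobenius_autE -exprM -expnSr /bump leq0n add1n.
Qed.

Lemma tr_bool (x : F) : tr x = 0 \/ tr x = 1.
Proof.
have : tr x * (tr x - 1) = 0 by rewrite mulrBr mulr1 -expr2 tr_sq subrr.
by move/eqP; rewrite mulf_eq0 subr_eq0 => /orP[] /eqP; [left | right].
Qed.

(* The trace is a polynomial of degree 2^(n-1) < #|F|, so it is not
   identically zero. *)
Lemma tr_onto1 : exists c : F, tr c = 1.
Proof.
pose p : {poly F} := \sum_(i < n) 'X^(2 ^ i).
have p_eval x : p.[x] = tr x.
  by rewrite horner_sum; apply: eq_bigr => i _; rewrite hornerXn.
have p_size : (size p <= (2 ^ n.-1).+1)%N.
  apply: leq_trans (size_sum _ _ _) _; apply/bigmax_leqP => i _.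
  by rewrite size_polyXn ltnS leq_exp2l //; have := ltn_ord i; lia.
have p_neq0 : p != 0.
  apply/eqP => /(congr1 (fun q : {poly F} => q`_1)).
  rewrite coef0 coef_sum (bigD1 (Ordinal n_gt0)) //= coefXn expn0 eqxx.
  rewrite big1 ?addr0 => [/eqP|i i_neq0]; first by rewrite oner_eq0.
  rewrite coefXn -[X in X == _](expn0 2) eqn_exp2l // eq_sym.
  rewrite (_ : (i == 0 :> nat) = false) //.
  by apply: contraNF i_neq0 => /eqP i0; apply/eqP/val_inj.
have [/existsP[c /eqP tr_c]|no_c] := boolP [exists c, tr c == 1]; first by exists c.
have all_roots : all (root p) (enum F).
  apply/allP => x _; rewrite /root p_eval.
  case: (tr_bool x) => tr_x; rewrite tr_x ?eqxx //.
  by case/negP: no_c; apply/existsP; exists x; rewrite tr_x.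
have := leq_trans (max_poly_roots p_neq0 all_roots (enum_uniq F)) p_size.
rewrite -cardE F_card -(prednK n_gt0) expnS /=.
by have := expn_gt0 2 n.-1; lia.
Qed.

Lemma chiD (x y : F) : chi (x + y) = chi x * chi y.
Proof.
have one_add_one : (1 + 1 : F) = 0 by rewrite -mulr2n (pcharf0 char2).
rewrite /chi trD.
by case: (tr_bool x) => ->; case: (tr_bool y) => ->;
  rewrite ?addr0 ?add0r ?one_add_one ?eqxx ?oner_eq0.
Qed.

Lemma chi0 : chi 0 = 1.
Proof. by rewrite /chi tr0 eqxx. Qed.

Lemma sum_const_F (c : int) : \sum_(x : F) c = (2 ^ n)%:Z * c.
Proof. by rewrite sumr_const -[#|xpredT|]/#|F| F_card -mulr_natl natz. Qed.

Lemma sum_const_nonzero (c : int) : \sum_(x : F | x != 0) c = ((2 ^ n)%:Z - 1) * c.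
Proof.
rewrite sumr_const cardC1 -[#|xpredT|]/#|F| F_card pmulrn mulrzz mulrC.
by congr (_ * _); have := expn_gt0 2 n; lia.
Qed.

(* Orthogonality: sum_b (-1)^Tr(by) = 2^n [y = 0]; for y <> 0 the sum is
   invariant under the shift b -> b + c that flips the sign of every term. *)
Lemma sum_chi (y : F) : \sum_(b : F) chi (b * y) = if y == 0 then (2 ^ n)%:Z else 0.
Proof.
have [->|y_neq0] := eqVneq y 0.
  by under eq_bigr do rewrite mulr0 chi0; rewrite sum_const_F mulr1.
have -> : \sum_b chi (b * y) = \sum_b chi b.
  by rewrite [RHS](reindex_inj (mulIf y_neq0)).
have [c chi_c] : exists c, chi c = -1.
  by have [c tr_c] := tr_onto1; exists c; rewrite /chi tr_c oner_eq0.
set T := \sum_b _.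
have : T = - T.
  rewrite {1}/T (reindex_inj (addIr c)) /=.
  by under eq_bigr do rewrite chiD chi_c mulrN1; rewrite sumrN.
by clearbody T; lia.
Qed.

End AdditiveCharacter.

Section WalshMoments.
Variables (F : finFieldType) (n k : nat) (f : F -> F).
Hypothesis F_card : #|F| = (2 ^ n)%N.
Hypothesis f0 : f 0 = 0.
Hypothesis preim0 : preim_card f 0 = 1%N.
Hypothesis fibre_card : forall y, y != 0 -> y \in codom f -> preim_card f y = k.
Local Notation chi := (@chi F n).
Local Notation W b := (walsh n f b 0).

Lemma walsh_at0 (b : F) : W b = \sum_x chi (b * f x).
Proof. by apply: eq_bigr => x _; rewrite mul0r addr0. Qed.

Lemma f_eq0 (x : F) : (f x == 0) = (x == 0).
Proof.
have [a fibre0] := cards1P (introT eqP preim0).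
have : 0 \in [set x | f x == 0] by rewrite inE f0.
rewrite fibre0 inE => /eqP a0.
by have := congr1 (fun A : {set F} => x \in A) fibre0; rewrite /= !inE -a0.
Qed.

Lemma preim_card_image (x : F) : preim_card f (f x) = if x == 0 then 1%N else k.
Proof.
have [->|x_neq0] := eqVneq x 0; first by rewrite f0.
by apply: fibre_card; [rewrite f_eq0 | apply: codom_f].
Qed.

Lemma walsh_origin : W 0 = (2 ^ n)%:Z.
Proof.
rewrite walsh_at0; under eq_bigr do rewrite mul0r chi0.
by rewrite (sum_const_F F_card) mulr1.
Qed.

(* Grouping x <> 0 by the value f x: W b = 1 + k * sum_(y in Im f, y <> 0) chi (b y). *)
Lemma walsh_congr (b : F) : exists K, W b = 1 + k%:Z * K.
Proof.
exists (\sum_(y | y != 0) (if y \in codom f then chi (b * y) else 0)).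
rewrite walsh_at0 (bigD1 0) //= f0 mulr0 chi0; congr (_ + _).
rewrite (partition_big f (fun y => y != 0)); last by move=> x; rewrite f_eq0.
rewrite mulr_sumr; apply: eq_bigr => y y_neq0.
rewrite (eq_bigr (fun _ => chi (b * y))); last by move=> x /andP[_ /eqP ->].
rewrite sumr_const.
have -> : #|[pred x | (x != 0) && (f x == y)]| = preim_card f y.
  rewrite /preim_card cardsE; apply: eq_card => x; rewrite !inE.
  have [->|//] := eqVneq x 0; rewrite unfold_in /= f0.
  by apply/esym/eqP => fy; move: y_neq0; rewrite -fy eqxx.
case: ifP => y_im; first by rewrite fibre_card // -mulr_natl natz.
suff -> : preim_card f y = 0%N by rewrite mulr0n mulr0.
apply/eqP; rewrite cards_eq0; apply/eqP/setP => x; rewrite !inE.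
by apply: contraFF y_im => /eqP <-; apply: codom_f.
Qed.

(* First moment: only x = 0 contributes after orthogonality. *)
Lemma sum_walsh : \sum_b W b = (2 ^ n)%:Z.
Proof.
rewrite (eq_bigr _ (fun b _ => walsh_at0 b)) exchange_big /=.
under eq_bigr do rewrite (sum_chi F_card) f_eq0.
by rewrite -big_mkcond big_pred1_eq.
Qed.

(* Second moment: 2^n times the number of pairs (x, y) with f x = f y. *)
Lemma sum_walsh_sq :
  \sum_b W b ^+ 2 = (2 ^ n)%:Z * (1 + ((2 ^ n)%:Z - 1) * k%:Z).
Proof.
have W_sq b : W b ^+ 2 = \sum_x \sum_y chi (b * (f x + f y)).
  rewrite expr2 walsh_at0 mulr_suml; apply: eq_bigr => x _; rewrite mulr_sumr.
  by apply: eq_bigr => y _; rewrite mulrDr chiD.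
rewrite (eq_bigr _ (fun b _ => W_sq b)) exchange_big /=.
under eq_bigr do rewrite exchange_big /=.
under eq_bigr do under eq_bigr do
  rewrite (sum_chi F_card) addr_eq0 (oppr_pchar2 (char2 F_card)).
have fibre x : #|[pred y | f x == f y]| = preim_card f (f x).
  by rewrite /preim_card cardsE; apply: eq_card => y; rewrite !inE eq_sym.
under eq_bigr => x _ do rewrite -big_mkcond sumr_const fibre preim_card_image.
rewrite (bigD1 0) //= eqxx.
rewrite (eq_bigr (fun _ => (2 ^ n)%:Z *+ k)); last by move=> x /negbTE ->.
rewrite sumr_const cardC1 -[#|xpredT|]/#|F| F_card !pmulrn !mulrzz.
have : (0 < 2 ^ n)%N by rewrite expn_gt0.
move: (2 ^ n)%N => N N_gt0.
have -> : (N.-1)%:Z = N%:Z - 1 by lia.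
ring.
Qed.

End WalshMoments.

Section WalshSpectrum.
Variables (F : finFieldType) (r m n : nat) (f : F -> F).
Hypothesis r_gt0 : (0 < r)%N.
Hypothesis n_eq : n = (2 * r * m)%N.
Hypothesis F_card : #|F| = (2 ^ n)%N.
Hypothesis f0 : f 0 = 0.
Hypothesis preim0 : preim_card f 0 = 1%N.
Hypothesis fibre_card : forall y, y != 0 -> y \in codom f -> preim_card f y = (2 ^ r).+1.
Hypothesis plateaued : componentwise_plateaued n f.
Local Notation W b := (walsh n f b 0).

(* W b = 1 (mod 2^r + 1), so W b <> 0. *)
Lemma walsh_neq0 (b : F) : W b != 0.
Proof.
have [K ->] := walsh_congr n f0 preim0 fibre_card b.
by apply: one_add_mul_neq0; rewrite ltz_nat ltnS expn_gt0.
Qed.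

(* Since W b <> 0, the b-component has amplitude t exactly when W b^2 = 2^(n+t). *)
Lemma plateaued_compE (b : F) (t : nat) : b != 0 ->
  plateaued_comp n f b t = (W b ^+ 2 == (2 ^ (n + t))%:Z).
Proof.
have level_sq s : plateaued_comp n f b s -> W b ^+ 2 = (2 ^ (n + s))%:Z.
  by move/forallP/(_ 0)/orP => [|/eqP //]; rewrite (negbTE (walsh_neq0 b)).
move=> b_neq0; apply/idP/eqP => [/level_sq // | W_sq].
have [s b_s] := plateaued b_neq0.
suff -> : t = s by [].
move: (level_sq s b_s); rewrite W_sq => /eqP.
by rewrite eqz_nat eqn_exp2l // eqn_add2l => /eqP.
Qed.

(* For b <> 0, W b = x_q for some q >= m, since W b^2 = 2^(n+t) >= 2^n. *)
Lemma walsh_sgpow (b : F) : b != 0 -> exists2 q, (m <= q)%N & W b = sgpow r q.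
Proof.
move=> b_neq0; have [t] := plateaued b_neq0.
rewrite plateaued_compE // => /eqP W_sq.
have : (`|W b| ^ 2 = 2 ^ (n + t))%N by rewrite -abszX W_sq absz_nat.
case/sqrt_pow2 => k [W_abs k_eq].
have [K W_congr] := walsh_congr n f0 preim0 fibre_card b.
have [q [k_rq ->]] := congr_one_pow2 r_gt0 W_congr W_abs.
by exists q => //; rewrite -(leq_pmul2l r_gt0); lia.
Qed.

Lemma sum_walsh_nonzero : \sum_(b | b != 0) W b = 0.
Proof.
have := sum_walsh F_card f0 preim0.
by rewrite (bigD1 0) //= (walsh_origin f F_card) => /(canRL (addKr _)); rewrite addNr.
Qed.

(* Expanding the product and using the two moments, the sum vanishes. *)
Lemma sum_walsh_product :
  \sum_(b | b != 0) (W b - sgpow r m) * (W b - sgpow r m.+1) = 0.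
Proof.
have sum_sq : \sum_(b | b != 0) W b ^+ 2 =
    (2 ^ n)%:Z * (1 + ((2 ^ n)%:Z - 1) * ((2 ^ r).+1)%:Z) - (2 ^ n)%:Z ^+ 2.
  rewrite -(sum_walsh_sq F_card f0 preim0 fibre_card) [in RHS](bigD1 0) //=.
  by rewrite (walsh_origin f F_card) addrC addrK.
have sgpow_m_sq : sgpow r m ^+ 2 = (2 ^ n)%:Z by rewrite sgpow_sq n_eq mulnA.
rewrite (eq_bigr (fun b => W b ^+ 2 + (- (sgpow r m + sgpow r m.+1)) * W b +
                          sgpow r m * sgpow r m.+1)); last by move=> b _; ring.
rewrite !big_split /= -mulr_sumr sum_walsh_nonzero sum_sq.
rewrite (sum_const_nonzero F_card) sgpowS.
have -> : ((2 ^ r).+1)%:Z = (2 ^ r)%:Z + 1 by rewrite -addn1 PoszD.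
have -> : sgpow r m * - ((2 ^ r)%:Z * sgpow r m) = - ((2 ^ r)%:Z * sgpow r m ^+ 2).
  by ring.
by rewrite sgpow_m_sq; ring.
Qed.

(* A sum of nonnegative terms (sgpow_outside) that vanishes has zero terms. *)
Lemma walsh_two_values (b : F) : b != 0 -> W b = sgpow r m \/ W b = sgpow r m.+1.
Proof.
have terms_ge0 i : i != 0 -> 0 <= (W i - sgpow r m) * (W i - sgpow r m.+1).
  by move=> i_neq0; have [q m_le_q ->] := walsh_sgpow i_neq0; exact: sgpow_outside.
move=> b_neq0; move: (psumr_eq0P terms_ge0 sum_walsh_product b_neq0) => /eqP.
by rewrite mulf_eq0 !subr_eq0 => /orP[] /eqP; [left | right].
Qed.

Lemma bent_compE (b : F) : b != 0 -> bent_comp n f b = (W b == sgpow r m).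
Proof.
move=> b_neq0; rewrite /bent_comp plateaued_compE //.
case: (walsh_two_values b_neq0) => ->; rewrite sgpow_sq_eq n_eq addn0.
  by rewrite mulnA !eqxx.
rewrite [sgpow r m.+1 == _]eq_sym (negbTE (sgpow_neqS m r_gt0)).
by apply/negbTE/eqP; nia.
Qed.

Lemma plateaued_2r_compE (b : F) : b != 0 ->
  plateaued_comp n f b (2 * r) = (W b == sgpow r m.+1).
Proof.
move=> b_neq0; rewrite plateaued_compE //.
case: (walsh_two_values b_neq0) => ->; rewrite sgpow_sq_eq n_eq.
  by rewrite (negbTE (sgpow_neqS m r_gt0)); apply/negbTE/eqP; nia.
by rewrite eqxx; apply/eqP; nia.
Qed.

(* With A values x_m and B values x_(m+1): A + B = 2^n - 1 and, from the
   first moment, x_m A + x_(m+1) B = 0, i.e. A = 2^r B. *)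
Lemma walsh_value_counts :
  let A := #|[set b | (b != 0) && (W b == sgpow r m)]| in
  let B := #|[set b | (b != 0) && (W b == sgpow r m.+1)]| in
  (A + B = 2 ^ n - 1)%N /\ A = (2 ^ r * B)%N.
Proof.
move=> A B.
have sum_values (G : int -> int) :
    \sum_(b | b != 0) G (W b) = G (sgpow r m) * A%:Z + G (sgpow r m.+1) * B%:Z.
  exact: sum_two_valued (sgpow_neqS m r_gt0) walsh_two_values.
have := sum_values (fun _ => 1); rewrite (sum_const_nonzero F_card) !mul1r mulr1.
move=> count_nonzero.
have := sum_values id; rewrite /= sum_walsh_nonzero sgpowS => sum_eq.
have sgpow_neq0 : sgpow r m != 0.
  by rewrite mulf_eq0 negb_or signr_eq0 eqz_nat expn_eq0.
have : sgpow r m * (A%:Z - (2 ^ r)%:Z * B%:Z) = 0 by rewrite sum_eq; ring.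
move/eqP; rewrite mulf_eq0 (negbTE sgpow_neq0) subr_eq0 => /eqP A_eq.
split; first by have := expn_gt0 2 n; lia.
by apply/eqP; rewrite -eqz_nat PoszM A_eq.
Qed.

Lemma card_bent_components :
  ((2 ^ r).+1 * #|[set lam : F | (lam != 0%R) && bent_comp n f lam]|
    = 2 ^ r * (2 ^ n - 1))%N.
Proof.
have [count ratio] := walsh_value_counts.
rewrite (_ : [set lam | _] = [set b | (b != 0) && (W b == sgpow r m)]); last first.
  by apply/setP => b; rewrite !inE; have [->|/bent_compE ->] := eqVneq b 0.
by rewrite ratio -count ratio mulSn mulnDr addnC.
Qed.

Lemma card_plateaued_2r_components :
  ((2 ^ r).+1 * #|[set lam : F | (lam != 0%R) && plateaued_comp n f lam (2 * r)]|
    = 2 ^ n - 1)%N.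
Proof.
have [count ratio] := walsh_value_counts.
rewrite (_ : [set lam | _] = [set b | (b != 0) && (W b == sgpow r m.+1)]); last first.
  by apply/setP => b; rewrite !inE; have [->|/plateaued_2r_compE ->] := eqVneq b 0.
by rewrite -count ratio mulSn addnC.
Qed.

End WalshSpectrum.

Theorem theorem6p5 (r m n : nat) (F : finFieldType) (f : F -> F) :
  (0 < r)%N -> (0 < m)%N -> n = (2 * r * m)%N -> #|F| = (2 ^ n)%N ->
  almost_k_to_1 f (2 ^ r).+1 ->
  componentwise_plateaued n f ->
  f 0 = 0 ->
  preim_card f 0 = 1%N ->
  [/\ ((2 ^ r).+1 * #|[set lam : F | (lam != 0%R) && bent_comp n f lam]|
         = 2 ^ r * (2 ^ n - 1))%N,
      ((2 ^ r).+1 * #|[set lam : F | (lam != 0%R) && plateaued_comp n f lam (2 * r)]|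
         = 2 ^ n - 1)%N &
      forall b : F, b != 0 ->
        walsh n f b 0 = (-1) ^+ m * (2 ^ (r * m))%:Z \/
        walsh n f b 0 = (-1) ^+ m.+1 * (2 ^ (r * m.+1))%:Z].
Proof.
move=> r_gt0 _ n_eq F_card almost plateaued f0 preim0.
have fibre_card y : y != 0 -> y \in codom f -> preim_card f y = (2 ^ r).+1.
  move=> y_neq0 y_im; apply: (almost_k_to_1_fibres _ almost _ preim0 y_im y_neq0).
    by rewrite eqSS expn_eq0.
  by rewrite -[X in X \in _]f0 codom_f.
split.
- exact: (card_bent_components r_gt0 n_eq F_card f0 preim0 fibre_card plateaued).
- exact: (card_plateaued_2r_components r_gt0 n_eq F_card f0 preim0 fibre_card plateaued).
- exact: (walsh_two_values r_gt0 n_eq F_card f0 preim0 fibre_card plateaued).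
Qed.
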